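(* For $\psi\in X_U$, let $G_\psi(u)=u-\psi(u)$, $u>0$; then $G_\psi$ is a bijection $(0,\infty)\to\mathbb R$, and setting $$\Phi_U(\psi)(v)=\frac{-\psi'(G_\psi^{-1}(v))}{1-\psi'(G_\psi^{-1}(v))},\qquad v\in\mathbb R,$$ the map $\Phi_U$ is a bijection from $X_U$ onto $Y_U$. Its inverse is $\Psi_U(\rho)(u)=\zeta^+_\rho\big((\zeta^-_\rho)^{-1}(u)\big)$, $u>0$, where $\zeta^-_\rho(v)=\int_{-\infty}^v(1-\rho(v'))dv'$ and $\zeta^+_\rho(v)=\int_v^\infty\rho(v')dv'$ (both bijections $\mathbb R\to(0,\infty)$).
   Context: $X_U$ is the set of $C^1$ functions $\psi:(0,\infty)\to(0,\infty)$ with $\psi'<0$, $\lim_{u\downarrow0}\psi(u)=\infty$, $\lim_{u\uparrow\infty}\psi(u)=0$. $Y_U$ is the set of continuous $\rho:\mathbb R\to(0,1)$ with $\int_{-\infty}^0(1-\rho(v))dv=\int_0^\infty\rho(v)dv<\infty$. *)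

From Stdlib Require Import Reals Lra ClassicalEpsilon.
Open Scope R_scope.

(* Choice operator on R (well defined whenever the predicate has a unique witness). *)
Definition Rchoose (P : R -> Prop) : R := epsilon (inhabits 0) P.

Definition upper_int (f : R -> R) (a l : R) : Prop :=
  (forall b, a <= b -> inhabited (Riemann_integrable f a b)) /\
  (forall eps, 0 < eps -> exists M, forall b (pr : Riemann_integrable f a b),
      M <= b -> Rabs (RiemannInt pr - l) < eps).

Definition lower_int (f : R -> R) (a l : R) : Prop :=
  (forall b, b <= a -> inhabited (Riemann_integrable f b a)) /\
  (forall eps, 0 < eps -> exists M, forall b (pr : Riemann_integrable f b a),
      b <= M -> Rabs (RiemannInt pr - l) < eps).

(* X_U : functions on (0,oo) (only values at u > 0 matter). *)
Definition in_XU (psi : R -> R) : Prop :=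
  (forall u, 0 < u -> 0 < psi u) /\
  (exists dpsi : R -> R,
      (forall u, 0 < u -> derivable_pt_lim psi u (dpsi u)) /\
      (forall u, 0 < u -> continuity_pt dpsi u) /\
      (forall u, 0 < u -> dpsi u < 0)) /\
  (forall M, exists delta, 0 < delta /\ forall u, 0 < u < delta -> M < psi u) /\
  (forall eps, 0 < eps -> exists N, forall u, N < u -> Rabs (psi u) < eps).

Definition in_YU (rho : R -> R) : Prop :=
  continuity rho /\
  (forall v, 0 < rho v < 1) /\
  (exists l, lower_int (fun v => 1 - rho v) 0 l /\ upper_int rho 0 l).

Definition der (psi : R -> R) (u : R) : R :=
  Rchoose (fun l => derivable_pt_lim psi u l).

Definition G (psi : R -> R) (u : R) : R := u - psi u.
Definition Ginv (psi : R -> R) (v : R) : R :=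
  Rchoose (fun u => 0 < u /\ G psi u = v).

Definition Phi_U (psi : R -> R) (v : R) : R :=
  - der psi (Ginv psi v) / (1 - der psi (Ginv psi v)).

Definition zeta_minus (rho : R -> R) (v : R) : R :=
  Rchoose (fun l => lower_int (fun w => 1 - rho w) v l).
Definition zeta_plus (rho : R -> R) (v : R) : R :=
  Rchoose (fun l => upper_int rho v l).
Definition zeta_minus_inv (rho : R -> R) (u : R) : R :=
  Rchoose (fun v => zeta_minus rho v = u).

Definition Psi_U (rho : R -> R) (u : R) : R :=
  zeta_plus rho (zeta_minus_inv rho u).

(* For rho in Y_U, zeta^-_rho is the
   antiderivative of 1 - rho that vanishes at -oo; it is strictly increasing
   from 0 to +oo, and zeta^+_rho = zeta^-_rho - id vanishes at +oo.  For psi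
   in X_U, the map G_psi = id - psi is strictly increasing from (0,oo) onto R,
   and its inverse is exactly zeta^-_(Phi_U psi): the derivative of G_psi^-1 is
   1/(1 - psi'(G_psi^-1)) = 1 - Phi_U psi.  Hence zeta^-_rho and G_psi are
   mutually inverse under the correspondence, and Psi_U rho = id - zeta^-^-1. *)

From Stdlib Require Import Reals Lra ClassicalEpsilon FunctionalExtensionality Ranalysis5.
Open Scope R_scope.

Lemma Rchoose_spec (P : R -> Prop) : (exists x, P x) -> P (Rchoose P).
Proof. intros H. unfold Rchoose. apply epsilon_spec. exact H. Qed.

Lemma Rchoose_eq (P : R -> Prop) x : P x -> (forall y, P y -> y = x) -> Rchoose P = x.
Proof. intros Hx Hu. apply Hu, Rchoose_spec. now exists x. Qed.

Lemma der_eq f x l : derivable_pt_lim f x l -> der f x = l.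
Proof.
  intros H. apply Rchoose_eq; [exact H|].
  intros y Hy. eapply uniqueness_limite; eauto.
Qed.

Definition lim_minus_infty (F : R -> R) (c : R) : Prop :=
  forall eps, 0 < eps -> exists M, forall b, b <= M -> Rabs (F b - c) < eps.

Definition lim_plus_infty (F : R -> R) (c : R) : Prop :=
  forall eps, 0 < eps -> exists M, forall b, M <= b -> Rabs (F b - c) < eps.

Lemma eq_of_common_approx l1 l2 :
  (forall eps, 0 < eps -> exists x, Rabs (x - l1) < eps /\ Rabs (x - l2) < eps) ->
  l1 = l2.
Proof.
  intros H. destruct (Req_dec l1 l2) as [|Hne]; [assumption|].
  assert (Hpos : 0 < Rabs (l1 - l2)) by (apply Rabs_pos_lt; lra).
  destruct (H (Rabs (l1 - l2) / 2) ltac:(lra)) as [x [H1 H2]].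
  assert (Rabs (l1 - l2) <= Rabs (x - l1) + Rabs (x - l2)).
  { replace (l1 - l2) with (- (x - l1) + (x - l2)) by ring.
    rewrite <- (Rabs_Ropp (x - l1)). apply Rabs_triang. }
  lra.
Qed.

Lemma pos_of_increasing_vanishing f :
  (forall x y, x < y -> f x < f y) -> lim_minus_infty f 0 -> forall v, 0 < f v.
Proof.
  intros Hinc Hlim v. destruct (Rlt_dec 0 (f v)) as [|Hn]; [assumption|].
  pose proof (Hinc (v - 1) v ltac:(lra)) as Hv.
  destruct (Hlim (- f (v - 1)) ltac:(lra)) as [M HM].
  set (b := Rmin M (v - 1)).
  specialize (HM b (Rmin_l _ _)).
  assert (f b <= f (v - 1)).
  { destruct (Req_dec b (v - 1)) as [E|E]; [rewrite E; lra|].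
    left. apply Hinc. pose proof (Rmin_r M (v - 1)) as Hb. fold b in Hb. lra. }
  rewrite Rminus_0_r, Rabs_left in HM; lra.
Qed.

Lemma pos_of_decreasing_vanishing f :
  (forall x y, x < y -> f y < f x) -> lim_plus_infty f 0 -> forall v, 0 < f v.
Proof.
  intros Hdec Hlim v. rewrite <- (Ropp_involutive v).
  apply (pos_of_increasing_vanishing (fun x => f (- x))).
  - intros x y Hxy. apply Hdec. lra.
  - intros eps He. destruct (Hlim eps He) as [M HM]. exists (- M).
    intros b Hb. apply HM. lra.
Qed.

Lemma cont_integrable f : continuity f -> forall a b, Riemann_integrable f a b.
Proof.
  intros Hc a b. destruct (Rle_dec a b).
  - apply continuity_implies_RiemannInt; auto.
  - apply RiemannInt_P1, continuity_implies_RiemannInt; [lra|auto].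
Qed.

Lemma FTC_segment (F f : R -> R) a b : a <= b ->
  (forall x, a <= x <= b -> derivable_pt_lim F x (f x)) ->
  (forall x, a <= x <= b -> continuity_pt f x) ->
  forall pr : Riemann_integrable f a b, RiemannInt pr = F b - F a.
Proof.
  intros Hab HF Hc pr.
  rewrite (RiemannInt_P20 Hab (FTC_P1 Hab Hc) pr).
  assert (Hanti : antiderivative f F a b).
  { split; [|exact Hab]. intros x Hx.
    exists (exist _ (f x) (HF x Hx)). reflexivity. }
  destruct (antiderivative_Ucte f _ _ _ _ (RiemannInt_P29 Hab Hc) Hanti) as [C HC].
  rewrite !HC; [ring | lra | lra].
Qed.

Lemma FTC_continuous (F f : R -> R) : continuity f ->
  (forall x, derivable_pt_lim F x (f x)) ->
  forall a b (pr : Riemann_integrable f a b), RiemannInt pr = F b - F a.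
Proof.
  intros Hc HF a b pr. destruct (Rle_dec a b).
  - apply FTC_segment; auto.
  - rewrite (RiemannInt_P8 pr (cont_integrable f Hc b a)).
    rewrite (FTC_segment F f b a); auto; lra.
Qed.

Lemma antiderivative_exists f : continuity f ->
  exists F, forall x, derivable_pt_lim F x (f x).
Proof.
  intros Hc. exists (fun y => RiemannInt (cont_integrable f Hc 0 y)). intros x.
  assert (h : x - 1 <= x + 1) by lra.
  assert (C0 : forall y, x - 1 <= y <= x + 1 -> continuity_pt f y) by (intros; apply Hc).
  set (P := primitive h (FTC_P1 h C0)).
  set (C := RiemannInt (cont_integrable f Hc 0 (x - 1))).
  assert (HP : derivable_pt_lim (fun y => C + P y) x (f x)).
  { apply derivable_pt_lim_ext with (f := (fct_cte C + P)%F); [reflexivity|].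
    replace (f x) with (0 + f x) by ring.
    apply derivable_pt_lim_plus; [apply derivable_pt_lim_const|].
    apply RiemannInt_P27. lra. }
  apply (derivable_pt_lim_locally_ext (fun y => C + P y) _ x (x - 1) (x + 1)); [lra| |exact HP].
  intros z Hz. unfold P, primitive.
  destruct (Rle_dec (x - 1) z); [|lra]. destruct (Rle_dec z (x + 1)); [|lra].
  apply RiemannInt_P26.
Qed.

Lemma lower_int_unique f a l1 l2 : lower_int f a l1 -> lower_int f a l2 -> l1 = l2.
Proof.
  intros [Hi H1] [_ H2]. apply eq_of_common_approx. intros eps He.
  destruct (H1 eps He) as [M1 HM1], (H2 eps He) as [M2 HM2].
  set (b := Rmin M1 (Rmin M2 a)).
  assert (b <= M1 /\ b <= M2 /\ b <= a) as (B1 & B2 & B3).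
  { unfold b. pose proof (Rmin_l M1 (Rmin M2 a)). pose proof (Rmin_r M1 (Rmin M2 a)).
    pose proof (Rmin_l M2 a). pose proof (Rmin_r M2 a). lra. }
  destruct (Hi b B3) as [pr]. exists (RiemannInt pr). auto.
Qed.

Lemma upper_int_unique f a l1 l2 : upper_int f a l1 -> upper_int f a l2 -> l1 = l2.
Proof.
  intros [Hi H1] [_ H2]. apply eq_of_common_approx. intros eps He.
  destruct (H1 eps He) as [M1 HM1], (H2 eps He) as [M2 HM2].
  set (b := Rmax M1 (Rmax M2 a)).
  assert (M1 <= b /\ M2 <= b /\ a <= b) as (B1 & B2 & B3).
  { unfold b. pose proof (Rmax_l M1 (Rmax M2 a)). pose proof (Rmax_r M1 (Rmax M2 a)).
    pose proof (Rmax_l M2 a). pose proof (Rmax_r M2 a). lra. }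
  destruct (Hi b B3) as [pr]. exists (RiemannInt pr). auto.
Qed.

Lemma lower_int_iff (F f : R -> R) a l : continuity f ->
  (forall x, derivable_pt_lim F x (f x)) ->
  lower_int f a l <-> lim_minus_infty F (F a - l).
Proof.
  intros Hc HF. split.
  - intros [_ H] eps He. destruct (H eps He) as [M HM]. exists M. intros b Hb.
    specialize (HM b (cont_integrable f Hc b a) Hb).
    rewrite (FTC_continuous F f Hc HF) in HM.
    replace (F b - (F a - l)) with (- (F a - F b - l)) by ring. now rewrite Rabs_Ropp.
  - intros H. split; [intros b _; constructor; apply cont_integrable; auto|].
    intros eps He. destruct (H eps He) as [M HM]. exists M. intros b pr Hb.
    rewrite (FTC_continuous F f Hc HF).
    replace (F a - F b - l) with (- (F b - (F a - l))) by ring.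
    rewrite Rabs_Ropp. auto.
Qed.

Lemma upper_int_iff (F f : R -> R) a l : continuity f ->
  (forall x, derivable_pt_lim F x (f x)) ->
  upper_int f a l <-> lim_plus_infty F (F a + l).
Proof.
  intros Hc HF. split.
  - intros [_ H] eps He. destruct (H eps He) as [M HM]. exists M. intros b Hb.
    specialize (HM b (cont_integrable f Hc a b) Hb).
    rewrite (FTC_continuous F f Hc HF) in HM.
    now replace (F b - (F a + l)) with (F b - F a - l) by ring.
  - intros H. split; [intros b _; constructor; apply cont_integrable; auto|].
    intros eps He. destruct (H eps He) as [M HM]. exists M. intros b pr Hb.
    rewrite (FTC_continuous F f Hc HF).
    replace (F b - F a - l) with (F b - (F a + l)) by ring. auto.
Qed.

Section IncreasingFunction.

Variables (D : R -> Prop) (f f' : R -> R).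
Hypothesis D_convex : forall x y z, D x -> D z -> x <= y <= z -> D y.
Hypothesis f_deriv : forall x, D x -> derivable_pt_lim f x (f' x).
Hypothesis f'_pos : forall x, D x -> 0 < f' x.

Lemma increasing_on x y : D x -> D y -> x < y -> f x < f y.
Proof.
  intros Dx Dy Hxy.
  destruct (MVT_cor2 f f' x y Hxy) as [c [Hc Hcxy]].
  { intros c Hc. apply f_deriv, (D_convex x c y); auto. }
  assert (0 < f' c * (y - x)).
  { apply Rmult_lt_0_compat; [|lra]. apply f'_pos, (D_convex x c y); auto; lra. }
  lra.
Qed.

Lemma injective_on x y : D x -> D y -> f x = f y -> x = y.
Proof.
  intros Dx Dy E. destruct (Rtotal_order x y) as [Hl|[He|Hl]]; auto.
  - pose proof (increasing_on x y Dx Dy Hl). lra.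
  - pose proof (increasing_on y x Dy Dx Hl). lra.
Qed.

Lemma continuous_on x : D x -> continuity_pt f x.
Proof. intros Dx. apply derivable_continuous_pt. exists (f' x). now apply f_deriv. Qed.

Lemma value_between x1 x2 y : D x1 -> D x2 -> x1 < x2 -> f x1 < y < f x2 ->
  exists x, D x /\ f x = y.
Proof.
  intros D1 D2 Hx Hy.
  destruct (IVT_interv (fun x => f x - y) x1 x2) as [x [Hx12 Hfx]]; try lra.
  - intros a Ha. apply continuity_pt_minus; [apply continuous_on, (D_convex x1 a x2); auto|].
    apply continuity_pt_const. intros ? ?. reflexivity.
  - exists x. split; [apply (D_convex x1 x x2); auto | lra].
Qed.

Section RightInverse.

Variables (E : R -> Prop) (g : R -> R).
Hypothesis E_convex : forall x y z, E x -> E z -> x <= y <= z -> E y.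
Hypothesis E_open : forall y, E y -> exists a b, E a /\ E b /\ a < y < b.
Hypothesis g_right_inverse : forall y, E y -> D (g y) /\ f (g y) = y.

Lemma inverse_left x : D x -> E (f x) -> g (f x) = x.
Proof.
  intros Dx Ex. destruct (g_right_inverse (f x) Ex) as [Dg Hg].
  apply injective_on; auto.
Qed.

Lemma inverse_le_iff x y : D x -> E y -> x <= g y <-> f x <= y.
Proof.
  intros Dx Ey. destruct (g_right_inverse y Ey) as [Dg Hg]. split.
  - intros [Hlt|Heq].
    + pose proof (increasing_on x (g y) Dx Dg Hlt). lra.
    + subst x. lra.
  - intros Hle. destruct (Rle_dec x (g y)) as [|Hn]; [assumption|].
    pose proof (increasing_on (g y) x Dg Dx ltac:(lra)). lra.
Qed.

Lemma inverse_increasing y z : E y -> E z -> y < z -> g y < g z.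
Proof.
  intros Ey Ez Hyz. destruct (g_right_inverse z Ez) as [Dz Hz].
  destruct (Rlt_dec (g y) (g z)) as [|Hn]; [assumption|].
  assert (Hle : g z <= g y) by lra.
  apply (inverse_le_iff (g z) y Dz Ey) in Hle. lra.
Qed.

Lemma inverse_monotone y z : E y -> E z -> y <= z -> g y <= g z.
Proof.
  intros Ey Ez [Hlt|Heq]; [left; apply inverse_increasing; auto | subst; lra].
Qed.

Lemma inverse_deriv y : E y ->
  continuity_pt g y /\ derivable_pt_lim g y (1 / f' (g y)).
Proof.
  intros Ey. destruct (E_open y Ey) as (a & b & Ea & Eb & Hay & Hyb).
  destruct (g_right_inverse a Ea) as [Da Ha], (g_right_inverse b Eb) as [Db Hb].
  assert (Hinterval : forall z, a <= z <= b -> E z) by (intros; apply (E_convex a z b); auto).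
  assert (Hg_range : forall z, a <= z <= b -> g a <= g z <= g b).
  { intros z Hz. destruct (g_right_inverse z (Hinterval z Hz)) as [Dz Hgz]. split.
    - apply (inverse_le_iff (g a) z Da (Hinterval z Hz)). lra.
    - apply (inverse_le_iff (g z) b Dz Eb). lra. }
  assert (HD : forall x, g a <= x <= g b -> D x) by (intros; apply (D_convex (g a) x (g b)); auto).
  assert (Hcont : continuity_pt g y).
  { apply (continuity_pt_recip_interv f g (g a) (g b)).
    - apply inverse_increasing; auto; lra.
    - intros x z Hx Hxz Hz. apply increasing_on; auto; apply HD; lra.
    - intros x Hx1 Hx2. rewrite Ha in Hx1. rewrite Hb in Hx2.
      unfold comp, id. apply (proj2 (g_right_inverse x (Hinterval x ltac:(lra)))).
    - intros x Hx1 Hx2. rewrite Ha in Hx1. rewrite Hb in Hx2. apply Hg_range. lra.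
    - intros x Hx. apply continuous_on, HD, Hx.
    - rewrite Ha, Hb. lra. }
  split; [exact Hcont|].
  assert (Prf : forall x, g a <= x <= g b -> derivable_pt f x)
    by (intros x Hx; exists (f' x); apply f_deriv, HD, Hx).
  assert (Hgy : g a <= g y <= g b) by (apply Hg_range; lra).
  assert (Hder : derive_pt f (g y) (Prf (g y) Hgy) = f' (g y))
    by (apply derive_pt_eq_0, f_deriv, HD, Hgy).
  rewrite <- Hder. apply derivable_pt_lim_recip_interv; auto.
  - lra.
  - intros x Hx. unfold comp, id. apply (proj2 (g_right_inverse x (Hinterval x Hx))).
  - rewrite Hder. apply Rgt_not_eq, f'_pos, HD, Hgy.
Qed.

End RightInverse.
End IncreasingFunction.

Lemma positive_convex x y z : 0 < x -> 0 < z -> x <= y <= z -> 0 < y.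
Proof. lra. Qed.

Lemma positive_open y : 0 < y -> exists a b, 0 < a /\ 0 < b /\ a < y < b.
Proof. intros Hy. exists (y / 2), (2 * y). repeat split; lra. Qed.

Lemma line_convex (x y z : R) : True -> True -> x <= y <= z -> True.
Proof. auto. Qed.

Lemma line_open y : True -> exists a b, True /\ True /\ a < y < b.
Proof. intros _. exists (y - 1), (y + 1). repeat split; lra. Qed.

Lemma continuity_one_minus rho : continuity rho -> continuity (fun w => 1 - rho w).
Proof.
  intros Hc v. apply (continuity_pt_minus (fun _ => 1) rho); [|apply Hc].
  apply continuity_pt_const. intros ? ?. reflexivity.
Qed.

Lemma deriv_id_minus rho F : (forall x, derivable_pt_lim F x (1 - rho x)) ->
  forall x, derivable_pt_lim (fun y => y - F y) x (rho x).
Proof.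
  intros HF x. apply derivable_pt_lim_ext with (f := (id - F)%F); [reflexivity|].
  replace (rho x) with (1 - (1 - rho x)) by ring.
  apply derivable_pt_lim_minus; [apply derivable_pt_lim_id | apply HF].
Qed.

Section Antiderivative.

Variables (rho F : R -> R).
Hypothesis rho_cont : continuity rho.
Hypothesis F_deriv : forall x, derivable_pt_lim F x (1 - rho x).

Lemma lower_int_of_vanishing v : lim_minus_infty F 0 -> lower_int (fun w => 1 - rho w) v (F v).
Proof.
  intros Hlim. apply (lower_int_iff F); [apply continuity_one_minus; auto | auto |].
  now rewrite Rminus_diag.
Qed.

Lemma upper_int_of_vanishing v : lim_plus_infty (fun w => F w - w) 0 -> upper_int rho v (F v - v).
Proof.
  intros Hlim. apply (upper_int_iff (fun y => y - F y)); [auto | apply deriv_id_minus; auto |].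
  replace (v - F v + (F v - v)) with 0 by ring.
  intros eps He. destruct (Hlim eps He) as [M HM]. exists M. intros b Hb.
  replace (b - F b - 0) with (- (F b - b - 0)) by ring. rewrite Rabs_Ropp. auto.
Qed.

Lemma zeta_minus_char : lim_minus_infty F 0 -> forall v, zeta_minus rho v = F v.
Proof.
  intros Hlim v. apply Rchoose_eq; [apply lower_int_of_vanishing; auto|].
  intros l Hl. eapply lower_int_unique; [exact Hl | apply lower_int_of_vanishing; auto].
Qed.

Lemma zeta_plus_char : lim_plus_infty (fun w => F w - w) 0 -> forall v, zeta_plus rho v = F v - v.
Proof.
  intros Hlim v. apply Rchoose_eq; [apply upper_int_of_vanishing; auto|].
  intros l Hl. eapply upper_int_unique; [exact Hl | apply upper_int_of_vanishing; auto].
Qed.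

Lemma in_YU_of_antiderivative : (forall v, 0 < rho v < 1) ->
  lim_minus_infty F 0 -> lim_plus_infty (fun w => F w - w) 0 -> in_YU rho.
Proof.
  intros Hrange Hminus Hplus. split; [auto | split; [auto|]].
  exists (F 0). split; [apply lower_int_of_vanishing; auto|].
  pose proof (upper_int_of_vanishing 0 Hplus) as Hupper. now rewrite Rminus_0_r in Hupper.
Qed.

End Antiderivative.

(* Conversely every rho in Y_U has such an antiderivative: shift an arbitrary
   antiderivative so that it vanishes at -oo. *)
Lemma YU_antiderivative rho : in_YU rho ->
  exists F, (forall x, derivable_pt_lim F x (1 - rho x)) /\
            lim_minus_infty F 0 /\ lim_plus_infty (fun w => F w - w) 0.
Proof.
  intros (Hc & _ & l & Hlower & Hupper).
  destruct (antiderivative_exists _ (continuity_one_minus rho Hc)) as [F0 HF0].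
  apply (lower_int_iff F0) in Hlower; [|apply continuity_one_minus; auto | auto].
  apply (upper_int_iff (fun y => y - F0 y)) in Hupper; [|auto | apply deriv_id_minus; auto].
  exists (fun x => F0 x - (F0 0 - l)). split; [|split].
  - intros x. apply derivable_pt_lim_ext with (f := (F0 - fct_cte (F0 0 - l))%F); [reflexivity|].
    rewrite <- Rminus_0_r. apply derivable_pt_lim_minus; [auto | apply derivable_pt_lim_const].
  - intros eps He. destruct (Hlower eps He) as [M HM]. exists M. intros b Hb.
    rewrite Rminus_0_r. auto.
  - intros eps He. destruct (Hupper eps He) as [M HM]. exists M. intros b Hb.
    specialize (HM b Hb).
    replace (F0 b - (F0 0 - l) - b - 0) with (- (b - F0 b - (0 - F0 0 + l))) by ring.
    now rewrite Rabs_Ropp.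
Qed.

Section PhiMap.

Variable psi : R -> R.
Hypothesis psi_XU : in_XU psi.

Lemma psi_deriv u : 0 < u -> derivable_pt_lim psi u (der psi u).
Proof.
  destruct psi_XU as (_ & (dpsi & Hd & _ & _) & _). intros Hu.
  rewrite (der_eq psi u (dpsi u)); auto.
Qed.

Lemma der_psi_neg u : 0 < u -> der psi u < 0.
Proof.
  destruct psi_XU as (_ & (dpsi & Hd & _ & Hneg) & _). intros Hu.
  rewrite (der_eq psi u (dpsi u)); auto.
Qed.

(* psi' is continuous on (0,oo): it agrees there with the continuous
   derivative provided by the definition of X_U. *)
Lemma der_psi_cont u : 0 < u -> continuity_pt (der psi) u.
Proof.
  destruct psi_XU as (_ & (dpsi & Hd & Hc & _) & _). intros Hu.
  apply (continuity_pt_locally_ext dpsi _ u u Hu); [|auto].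
  intros y Hy. unfold Rdist in Hy. apply Rabs_def2 in Hy.
  symmetry. apply der_eq, Hd. lra.
Qed.

Lemma G_deriv u : 0 < u -> derivable_pt_lim (G psi) u (1 - der psi u).
Proof.
  intros Hu. apply derivable_pt_lim_ext with (f := (id - psi)%F); [reflexivity|].
  apply derivable_pt_lim_minus; [apply derivable_pt_lim_id | apply psi_deriv, Hu].
Qed.

Lemma G_slope_pos u : 0 < u -> 0 < 1 - der psi u.
Proof. intros Hu. pose proof (der_psi_neg u Hu). lra. Qed.

(* G_psi is onto R: it tends to -oo at 0 since psi blows up, and to +oo at
   +oo since psi vanishes. *)
Lemma G_onto v : exists u, 0 < u /\ G psi u = v.
Proof.
  destruct psi_XU as (_ & _ & Hblow & Hvan).
  destruct (Hblow (Rabs v + 1)) as [delta [Hdelta Hpsi]].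
  set (a := Rmin (delta / 2) 1).
  assert (0 < a /\ a <= 1 /\ a <= delta / 2) as (Ha0 & Ha1 & Ha2).
  { unfold a. split; [apply Rmin_pos; lra | split; [apply Rmin_r | apply Rmin_l]]. }
  destruct (Hvan 1 ltac:(lra)) as [N HN].
  set (b := Rmax N a + Rabs v + 2).
  assert (N < b /\ a < b) as [HNb Hab].
  { unfold b. pose proof (Rmax_l N a). pose proof (Rmax_r N a). pose proof (Rabs_pos v). lra. }
  assert (HGa : G psi a < v).
  { unfold G. specialize (Hpsi a ltac:(lra)). pose proof (Rle_abs (- v)).
    rewrite Rabs_Ropp in *. lra. }
  assert (HGb : v < G psi b).
  { unfold G. specialize (HN b HNb). pose proof (Rle_abs (psi b)). pose proof (Rle_abs v).
    unfold b in *. pose proof (Rmax_r N a). lra. }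
  apply (value_between _ _ _ positive_convex G_deriv a b); auto; lra.
Qed.

Lemma G_bijective v : exists! u, 0 < u /\ G psi u = v.
Proof.
  destruct (G_onto v) as [u [Hu HGu]]. exists u. split; [auto|].
  intros u' [Hu' HGu']. symmetry.
  apply (injective_on _ _ _ positive_convex G_deriv G_slope_pos); auto; congruence.
Qed.

Lemma Ginv_spec v : 0 < Ginv psi v /\ G psi (Ginv psi v) = v.
Proof. unfold Ginv. apply Rchoose_spec, G_onto. Qed.

Lemma Ginv_G u : 0 < u -> Ginv psi (G psi u) = u.
Proof.
  intros Hu. apply (inverse_left _ _ _ positive_convex G_deriv G_slope_pos (fun _ => True));
    auto using Ginv_spec.
Qed.

Lemma Ginv_monotone v w : v <= w -> Ginv psi v <= Ginv psi w.
Proof.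
  intros Hvw. apply (inverse_monotone _ _ _ positive_convex G_deriv G_slope_pos (fun _ => True));
    auto using Ginv_spec.
Qed.

Lemma Ginv_deriv v :
  continuity_pt (Ginv psi) v /\ derivable_pt_lim (Ginv psi) v (1 / (1 - der psi (Ginv psi v))).
Proof.
  apply (inverse_deriv _ _ _ positive_convex G_deriv G_slope_pos (fun _ => True));
    auto using Ginv_spec, line_open.
Qed.

(* Phi_U psi = - psi'(G^-1) / (1 - psi'(G^-1)), so that 1 - Phi_U psi is
   1 / (1 - psi'(G^-1)), the derivative of G_psi^-1. *)
Lemma Phi_range v : 0 < Phi_U psi v < 1.
Proof.
  unfold Phi_U. pose proof (der_psi_neg _ (proj1 (Ginv_spec v))).
  split; [apply Rdiv_lt_0_compat; lra|].
  apply Rmult_lt_reg_r with (1 - der psi (Ginv psi v)); [lra|]. unfold Rdiv.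
  rewrite Rmult_assoc, Rinv_l by lra. lra.
Qed.

Lemma Phi_cont : continuity (Phi_U psi).
Proof.
  intros v. destruct (Ginv_spec v) as [Hpos _].
  assert (Hd : continuity_pt (fun w => der psi (Ginv psi w)) v).
  { apply (continuity_pt_comp (Ginv psi) (der psi)); [apply Ginv_deriv | apply der_psi_cont, Hpos]. }
  pose proof (der_psi_neg _ Hpos).
  apply (continuity_pt_div (fun w => - der psi (Ginv psi w)) (fun w => 1 - der psi (Ginv psi w))).
  - apply (continuity_pt_opp (fun w => der psi (Ginv psi w))), Hd.
  - apply (continuity_pt_minus (fun _ => 1) (fun w => der psi (Ginv psi w))); [|exact Hd].
    apply continuity_pt_const. intros ? ?. reflexivity.
  - lra.
Qed.

Lemma Ginv_antiderivative v : derivable_pt_lim (Ginv psi) v (1 - Phi_U psi v).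
Proof.
  replace (1 - Phi_U psi v) with (1 / (1 - der psi (Ginv psi v))); [apply Ginv_deriv|].
  unfold Phi_U. pose proof (der_psi_neg _ (proj1 (Ginv_spec v))). field. lra.
Qed.

Lemma Ginv_vanishes : lim_minus_infty (Ginv psi) 0.
Proof.
  intros eps He. exists (G psi (eps / 2)). intros b Hb.
  pose proof (Ginv_monotone _ _ Hb) as Hle. rewrite Ginv_G in Hle by lra.
  pose proof (proj1 (Ginv_spec b)).
  rewrite Rminus_0_r, Rabs_right; lra.
Qed.

(* ... and G_psi^-1 - id = psi o G_psi^-1 vanishes at +oo. *)
Lemma Ginv_minus_id_vanishes : lim_plus_infty (fun v => Ginv psi v - v) 0.
Proof.
  destruct psi_XU as (_ & _ & _ & Hvan).
  intros eps He. destruct (Hvan eps He) as [N HN].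
  assert (HN1 : 0 < Rmax N 1 + 1) by (pose proof (Rmax_r N 1); lra).
  exists (G psi (Rmax N 1 + 1)). intros b Hb.
  pose proof (Ginv_monotone _ _ Hb) as Hle. rewrite Ginv_G in Hle by exact HN1.
  destruct (Ginv_spec b) as [_ HG]. unfold G in HG.
  replace (Ginv psi b - b - 0) with (psi (Ginv psi b)) by lra.
  apply HN. pose proof (Rmax_l N 1). lra.
Qed.

(* Phi_U maps X_U into Y_U, with G_psi^-1 as the antiderivative of 1 - Phi_U psi. *)
Lemma Phi_in_YU : in_YU (Phi_U psi).
Proof.
  apply (in_YU_of_antiderivative _ (Ginv psi)); auto using Phi_cont, Phi_range,
    Ginv_antiderivative, Ginv_vanishes, Ginv_minus_id_vanishes.
Qed.

Lemma zeta_minus_Phi v : zeta_minus (Phi_U psi) v = Ginv psi v.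
Proof.
  apply zeta_minus_char; auto using Phi_cont, Ginv_antiderivative, Ginv_vanishes.
Qed.

Lemma zeta_plus_Phi v : zeta_plus (Phi_U psi) v = Ginv psi v - v.
Proof.
  apply zeta_plus_char; auto using Phi_cont, Ginv_antiderivative, Ginv_minus_id_vanishes.
Qed.

Lemma Psi_Phi u : 0 < u -> Psi_U (Phi_U psi) u = psi u.
Proof.
  intros Hu. unfold Psi_U, zeta_minus_inv.
  rewrite (Rchoose_eq _ (G psi u)).
  - rewrite zeta_plus_Phi, Ginv_G by exact Hu. unfold G. ring.
  - rewrite zeta_minus_Phi. apply Ginv_G, Hu.
  - intros y Hy. rewrite zeta_minus_Phi in Hy. rewrite <- Hy.
    symmetry. apply Ginv_spec.
Qed.

End PhiMap.

Section PsiMap.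

Variable rho : R -> R.
Hypothesis rho_YU : in_YU rho.

Lemma rho_cont : continuity rho.
Proof. apply rho_YU. Qed.

Lemma one_minus_rho_pos v : 0 < 1 - rho v.
Proof. destruct rho_YU as (_ & Hrange & _). specialize (Hrange v). lra. Qed.

Lemma rho_pos v : 0 < rho v.
Proof. apply rho_YU. Qed.

Lemma zeta_minus_deriv x : derivable_pt_lim (zeta_minus rho) x (1 - rho x).
Proof.
  destruct (YU_antiderivative rho rho_YU) as (F & HF & Hminus & _).
  apply derivable_pt_lim_ext with (f := F); [|auto].
  intros z. symmetry. apply zeta_minus_char; auto using rho_cont.
Qed.

Lemma zeta_minus_vanishes : lim_minus_infty (zeta_minus rho) 0.
Proof.
  destruct (YU_antiderivative rho rho_YU) as (F & HF & Hminus & _).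
  intros eps He. destruct (Hminus eps He) as [M HM]. exists M. intros b Hb.
  rewrite zeta_minus_char with (F := F); auto using rho_cont.
Qed.

Lemma zeta_plus_eq v : zeta_plus rho v = zeta_minus rho v - v.
Proof.
  destruct (YU_antiderivative rho rho_YU) as (F & HF & Hminus & Hplus).
  rewrite zeta_plus_char with (F := F), zeta_minus_char with (F := F); auto using rho_cont.
Qed.

Lemma zeta_plus_vanishes : lim_plus_infty (zeta_plus rho) 0.
Proof.
  destruct (YU_antiderivative rho rho_YU) as (F & HF & Hminus & Hplus).
  intros eps He. destruct (Hplus eps He) as [M HM]. exists M. intros b Hb.
  rewrite zeta_plus_char with (F := F); auto using rho_cont.
Qed.

Lemma zeta_minus_lower_int v : lower_int (fun w => 1 - rho w) v (zeta_minus rho v).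
Proof. apply lower_int_of_vanishing; auto using rho_cont, zeta_minus_deriv, zeta_minus_vanishes. Qed.

Lemma zeta_plus_upper_int v : upper_int rho v (zeta_plus rho v).
Proof.
  rewrite zeta_plus_eq. apply upper_int_of_vanishing; auto using rho_cont, zeta_minus_deriv.
  intros eps He. destruct (zeta_plus_vanishes eps He) as [M HM]. exists M. intros b Hb.
  rewrite <- zeta_plus_eq. auto.
Qed.

Lemma zeta_minus_increasing x y : x < y -> zeta_minus rho x < zeta_minus rho y.
Proof.
  apply (increasing_on (fun _ => True) _ _ line_convex
           (fun x _ => zeta_minus_deriv x) (fun x _ => one_minus_rho_pos x)); auto.
Qed.

Lemma id_minus_zeta_deriv x : True -> derivable_pt_lim (fun v => v - zeta_minus rho v) x (rho x).
Proof. intros _. apply deriv_id_minus, zeta_minus_deriv. Qed.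

Lemma zeta_plus_decreasing x y : x < y -> zeta_plus rho y < zeta_plus rho x.
Proof.
  intros Hxy. rewrite !zeta_plus_eq.
  pose proof (increasing_on (fun _ => True) _ _ line_convex id_minus_zeta_deriv
                (fun x _ => rho_pos x) x y I I Hxy).
  lra.
Qed.

Lemma zeta_minus_pos v : 0 < zeta_minus rho v.
Proof. apply pos_of_increasing_vanishing; auto using zeta_minus_increasing, zeta_minus_vanishes. Qed.

Lemma zeta_plus_pos v : 0 < zeta_plus rho v.
Proof. apply pos_of_decreasing_vanishing; auto using zeta_plus_decreasing, zeta_plus_vanishes. Qed.

Lemma zeta_minus_onto u : 0 < u -> exists v, zeta_minus rho v = u.
Proof.
  intros Hu. destruct (zeta_minus_vanishes u Hu) as [a Ha].
  specialize (Ha a (Rle_refl a)). rewrite Rminus_0_r in Ha.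
  pose proof (Rle_abs (zeta_minus rho a)).
  set (b := Rmax a u + 1).
  assert (a < b /\ u < b) as [Hab Hub]
    by (unfold b; pose proof (Rmax_l a u); pose proof (Rmax_r a u); lra).
  assert (u < zeta_minus rho b) by (pose proof (zeta_plus_pos b); rewrite zeta_plus_eq in *; lra).
  destruct (value_between (fun _ => True) _ _ line_convex (fun x _ => zeta_minus_deriv x) a b u)
    as [v [_ Hv]]; auto; try lra.
  now exists v.
Qed.

Lemma zeta_plus_onto u : 0 < u -> exists v, zeta_plus rho v = u.
Proof.
  intros Hu. destruct (zeta_plus_vanishes u Hu) as [b Hb].
  specialize (Hb b (Rle_refl b)). rewrite Rminus_0_r in Hb.
  pose proof (Rle_abs (zeta_plus rho b)).
  set (a := Rmin (- u) b - 1).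
  assert (a < b /\ a < - u) as [Hab Hau]
    by (unfold a; pose proof (Rmin_l (- u) b); pose proof (Rmin_r (- u) b); lra).
  assert (a - zeta_minus rho a < - u) by (pose proof (zeta_minus_pos a); lra).
  assert (- u < b - zeta_minus rho b) by (rewrite zeta_plus_eq in *; lra).
  destruct (value_between (fun _ => True) _ _ line_convex id_minus_zeta_deriv a b (- u))
    as [v [_ Hv]]; auto.
  exists v. rewrite zeta_plus_eq. lra.
Qed.

Lemma zeta_minus_bijective u : 0 < u -> exists! v, zeta_minus rho v = u.
Proof.
  intros Hu. destruct (zeta_minus_onto u Hu) as [v Hv]. exists v. split; [exact Hv|].
  intros w Hw. destruct (Rtotal_order v w) as [Hlt|[Heq|Hgt]]; [|auto|].
  - pose proof (zeta_minus_increasing v w Hlt). lra.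
  - pose proof (zeta_minus_increasing w v Hgt). lra.
Qed.

Lemma zeta_plus_bijective u : 0 < u -> exists! v, zeta_plus rho v = u.
Proof.
  intros Hu. destruct (zeta_plus_onto u Hu) as [v Hv]. exists v. split; [exact Hv|].
  intros w Hw. destruct (Rtotal_order v w) as [Hlt|[Heq|Hgt]]; [|auto|].
  - pose proof (zeta_plus_decreasing v w Hlt). lra.
  - pose proof (zeta_plus_decreasing w v Hgt). lra.
Qed.

Lemma zeta_minus_inv_spec u : 0 < u -> True /\ zeta_minus rho (zeta_minus_inv rho u) = u.
Proof. intros Hu. split; [exact I|]. unfold zeta_minus_inv. apply Rchoose_spec, zeta_minus_onto, Hu. Qed.

Lemma zeta_minus_inv_left v : zeta_minus_inv rho (zeta_minus rho v) = v.
Proof.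
  apply (inverse_left (fun _ => True) _ _ line_convex (fun x _ => zeta_minus_deriv x)
           (fun x _ => one_minus_rho_pos x) (fun u => 0 < u)); auto using zeta_minus_inv_spec, zeta_minus_pos.
Qed.

Lemma zeta_minus_inv_le_iff x u : 0 < u -> x <= zeta_minus_inv rho u <-> zeta_minus rho x <= u.
Proof.
  intros Hu. apply (inverse_le_iff (fun _ => True) _ _ line_convex (fun x _ => zeta_minus_deriv x)
           (fun x _ => one_minus_rho_pos x) (fun u => 0 < u)); auto using zeta_minus_inv_spec.
Qed.

Lemma zeta_minus_inv_deriv u : 0 < u ->
  continuity_pt (zeta_minus_inv rho) u /\
  derivable_pt_lim (zeta_minus_inv rho) u (1 / (1 - rho (zeta_minus_inv rho u))).
Proof.
  intros Hu. apply (inverse_deriv (fun _ => True) _ _ line_convex (fun x _ => zeta_minus_deriv x)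
           (fun x _ => one_minus_rho_pos x) (fun u => 0 < u));
    auto using zeta_minus_inv_spec.
  - exact positive_convex.
  - exact positive_open.
Qed.

Lemma Psi_eq u : 0 < u -> Psi_U rho u = u - zeta_minus_inv rho u.
Proof.
  intros Hu. unfold Psi_U. rewrite zeta_plus_eq, (proj2 (zeta_minus_inv_spec u Hu)). reflexivity.
Qed.

Definition Psi_slope (u : R) : R :=
  - rho (zeta_minus_inv rho u) / (1 - rho (zeta_minus_inv rho u)).

Lemma Psi_deriv u : 0 < u -> derivable_pt_lim (Psi_U rho) u (Psi_slope u).
Proof.
  intros Hu. apply (derivable_pt_lim_locally_ext (fun z => z - zeta_minus_inv rho z) _ u 0 (2 * u)).
  - lra.
  - intros z Hz. symmetry. apply Psi_eq. lra.
  - apply derivable_pt_lim_ext with (f := (id - zeta_minus_inv rho)%F); [reflexivity|].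
    replace (Psi_slope u) with (1 - 1 / (1 - rho (zeta_minus_inv rho u))).
    + apply derivable_pt_lim_minus; [apply derivable_pt_lim_id | apply zeta_minus_inv_deriv, Hu].
    + unfold Psi_slope. pose proof (one_minus_rho_pos (zeta_minus_inv rho u)). field. lra.
Qed.

Lemma Psi_slope_cont u : 0 < u -> continuity_pt Psi_slope u.
Proof.
  intros Hu.
  assert (Hr : continuity_pt (fun z => rho (zeta_minus_inv rho z)) u).
  { apply (continuity_pt_comp (zeta_minus_inv rho) rho); [apply zeta_minus_inv_deriv, Hu | apply rho_cont]. }
  pose proof (one_minus_rho_pos (zeta_minus_inv rho u)).
  apply (continuity_pt_div (fun z => - rho (zeta_minus_inv rho z))
                           (fun z => 1 - rho (zeta_minus_inv rho z))).
  - apply (continuity_pt_opp (fun z => rho (zeta_minus_inv rho z))), Hr.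
  - apply (continuity_pt_minus (fun _ => 1) (fun z => rho (zeta_minus_inv rho z))); [|exact Hr].
    apply continuity_pt_const. intros ? ?. reflexivity.
  - lra.
Qed.

Lemma Psi_slope_neg u : Psi_slope u < 0.
Proof.
  unfold Psi_slope. pose proof (rho_pos (zeta_minus_inv rho u)).
  pose proof (one_minus_rho_pos (zeta_minus_inv rho u)).
  assert (0 < rho (zeta_minus_inv rho u) / (1 - rho (zeta_minus_inv rho u)))
    by (apply Rdiv_lt_0_compat; lra).
  unfold Rdiv in *. lra.
Qed.

(* Psi_U rho blows up at 0, because (zeta^-)^-1 tends to -oo there. *)
Lemma Psi_blowup M : exists delta, 0 < delta /\ forall u, 0 < u < delta -> M < Psi_U rho u.
Proof.
  set (w0 := Rmin (- M) 0 - 1).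
  exists (zeta_minus rho w0). split; [apply zeta_minus_pos|].
  intros u [Hu Hu0].
  assert (zeta_minus_inv rho u < w0).
  { destruct (Rlt_dec (zeta_minus_inv rho u) w0) as [|Hn]; [assumption|].
    assert (Hle : w0 <= zeta_minus_inv rho u) by lra.
    apply (zeta_minus_inv_le_iff w0 u Hu) in Hle. lra. }
  rewrite Psi_eq by exact Hu. unfold w0 in *. pose proof (Rmin_l (- M) 0). lra.
Qed.

Lemma Psi_vanishes eps : 0 < eps -> exists N, forall u, N < u -> Rabs (Psi_U rho u) < eps.
Proof.
  intros He. destruct (zeta_plus_vanishes eps He) as [M HM].
  exists (zeta_minus rho M). intros u Hu. pose proof (zeta_minus_pos M).
  unfold Psi_U. rewrite <- (Rminus_0_r (zeta_plus rho _)). apply HM.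
  apply zeta_minus_inv_le_iff; lra.
Qed.

Lemma Psi_in_XU : in_XU (Psi_U rho).
Proof.
  split; [|split; [|split]].
  - intros u _. apply zeta_plus_pos.
  - exists Psi_slope. auto using Psi_deriv, Psi_slope_cont, Psi_slope_neg.
  - exact Psi_blowup.
  - exact Psi_vanishes.
Qed.

(* Phi_U is a left inverse of Psi_U: G_(Psi_U rho) = (zeta^-)^-1 on (0,oo),
   hence G_(Psi_U rho)^-1 = zeta^-. *)
Lemma Ginv_Psi v : Ginv (Psi_U rho) v = zeta_minus rho v.
Proof.
  assert (HG : forall u, 0 < u -> G (Psi_U rho) u = zeta_minus_inv rho u)
    by (intros u Hu; unfold G; rewrite Psi_eq by exact Hu; ring).
  apply Rchoose_eq.
  - split; [apply zeta_minus_pos|]. rewrite HG by apply zeta_minus_pos. apply zeta_minus_inv_left.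
  - intros y [Hy HGy]. rewrite HG in HGy by exact Hy. subst v.
    symmetry. apply zeta_minus_inv_spec, Hy.
Qed.

(* Phi_U o Psi_U = id on Y_U: psi' at zeta^- v equals - rho v / (1 - rho v). *)
Lemma Phi_Psi v : Phi_U (Psi_U rho) v = rho v.
Proof.
  unfold Phi_U. rewrite Ginv_Psi.
  rewrite (der_eq _ _ _ (Psi_deriv _ (zeta_minus_pos v))).
  unfold Psi_slope. rewrite zeta_minus_inv_left.
  pose proof (one_minus_rho_pos v). field. split; lra.
Qed.

End PsiMap.

Theorem proposition4p4 :
  (forall psi, in_XU psi -> forall v, exists! u, 0 < u /\ G psi u = v) /\
  (forall psi, in_XU psi -> in_YU (Phi_U psi)) /\
  (forall psi1 psi2, in_XU psi1 -> in_XU psi2 ->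
     (forall v, Phi_U psi1 v = Phi_U psi2 v) -> forall u, 0 < u -> psi1 u = psi2 u) /\
  (forall rho, in_YU rho ->
     (forall v, lower_int (fun w => 1 - rho w) v (zeta_minus rho v)) /\
     (forall v, upper_int rho v (zeta_plus rho v)) /\
     (forall v, 0 < zeta_minus rho v) /\
     (forall u, 0 < u -> exists! v, zeta_minus rho v = u) /\
     (forall v, 0 < zeta_plus rho v) /\
     (forall u, 0 < u -> exists! v, zeta_plus rho v = u) /\
     in_XU (Psi_U rho) /\
     (forall v, Phi_U (Psi_U rho) v = rho v)) /\
  (forall psi, in_XU psi -> forall u, 0 < u -> Psi_U (Phi_U psi) u = psi u).
Proof.
  split; [exact G_bijective|]. split; [exact Phi_in_YU|].
  split.
  -
    intros psi1 psi2 H1 H2 Heq u Hu.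
    assert (Hphi : Phi_U psi1 = Phi_U psi2) by (apply functional_extensionality; exact Heq).
    rewrite <- (Psi_Phi psi1 H1 u Hu), <- (Psi_Phi psi2 H2 u Hu), Hphi. reflexivity.
  - split; [|exact Psi_Phi].
    intros rho Hrho.
    refine (conj (zeta_minus_lower_int rho Hrho) (conj (zeta_plus_upper_int rho Hrho) _)).
    refine (conj (zeta_minus_pos rho Hrho) (conj (zeta_minus_bijective rho Hrho) _)).
    refine (conj (zeta_plus_pos rho Hrho) (conj (zeta_plus_bijective rho Hrho) _)).
    exact (conj (Psi_in_XU rho Hrho) (Phi_Psi rho Hrho)).
Qed.
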